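(* Let $G$ be a finite $p$-group for some prime $p$, and let $X(G)$ be the subgroup generated by all normal subgroups $N$ of $G$ satisfying $\eta(G/N) = \eta(G)$. If some maximal cyclic subgroup of $G$ is normal in $G$, then $X(G)$ is cyclic.
   Context: A cyclic subgroup $C$ of a group $G$ is maximal cyclic if there is no cyclic subgroup $D$ of $G$ with $C < D$. $\eta(G)$ denotes the number of conjugacy classes of maximal cyclic subgroups of $G$ (for the trivial group, $\eta = 1$). *)

From mathcomp Require Import all_boot all_fingroup all_solvable.
Set Implicit Arguments. Unset Strict Implicit. Unset Printing Implicit Defensive.
Local Open Scope group_scope.

Definition max_cyclics (gT : finGroupType) (G : {set gT}) : {set {group gT}} :=
  [set C : {group gT} | [max C of H | (H \subset G) && cyclic H]].

Definition eta (gT : finGroupType) (G : {set gT}) : nat :=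
  #|[set orbit 'JG G C | C in max_cyclics G]|.

Definition Xgrp (gT : finGroupType) (G : {set gT}) : {set gT} :=
  << \bigcup_(N : {group gT} | (N <| G) && (eta (G / N) == eta G)) N >>.

From mathcomp Require Import all_boot all_fingroup all_solvable.
Local Open Scope group_scope.

(* Every maximal cyclic subgroup of G/N is the image of a maximal cyclic
   subgroup of G, so conjugacy classes of maximal cyclic subgroups of G map
   onto those of G/N.  When eta(G/N) = eta(G) this surjection is a bijection.
   Now let C = <c> be a normal maximal cyclic subgroup and x in N.  A maximal
   cyclic D containing cx has D/N containing <cxN> = C/N, which is maximal
   cyclic in G/N, so D/N = C/N; by injectivity D is conjugate to C, hence
   D = C and x in C.  Thus every such N lies in the cyclic group C, and so
   does X(G). *)

Definition max_cyclic_classes {gT : finGroupType} (G : {set gT}) :=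
  [set orbit 'JG G C | C in max_cyclics G].

Definition quotient_groups {gT : finGroupType} (N : {set gT})
    (S : {set {group gT}}) : {set {group coset_of N}} :=
  [set (X / N)%G | X in S].

Section MaxCyclics.

Set Implicit Arguments. Unset Strict Implicit.

Variable gT : finGroupType.
Implicit Types G C D : {group gT}.

Lemma etaE (G : {set gT}) : eta G = #|max_cyclic_classes G|.
Proof. by []. Qed.

Lemma max_cyclic_sub G C : C \in max_cyclics G -> C \subset G.
Proof. by rewrite inE => /maxgroupp/andP[]. Qed.

Lemma max_cyclic_cyclic G C : C \in max_cyclics G -> cyclic C.
Proof. by rewrite inE => /maxgroupp/andP[]. Qed.

Lemma max_cyclic_eq G C D :
  C \in max_cyclics G -> D \subset G -> cyclic D -> C \subset D -> D = C.
Proof.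
rewrite inE => /maxgroupP[_ maxC] sDG cD sCD.
by apply/val_inj/maxC; rewrite ?sDG.
Qed.

Lemma max_cyclic_exists G D :
  D \subset G -> cyclic D -> exists2 C, C \in max_cyclics G & D \subset C.
Proof.
move=> sDG cD.
pose cyclic_in_G := fun H : {group gT} => (H \subset G) && cyclic H.
have [C maxC sDC] := @maxgroup_exists _ cyclic_in_G D (introT andP (conj sDG cD)).
by exists C; rewrite ?inE.
Qed.

Lemma max_cyclicsJ G C g :
  C \in max_cyclics G -> g \in G -> (C :^ g)%G \in max_cyclics G.
Proof.
move=> maxC Gg; have sCG := max_cyclic_sub maxC.
rewrite inE; apply/maxgroupP; split.
  by rewrite /= cyclicJ (max_cyclic_cyclic maxC) -(conjGid Gg) conjSg sCG.
move=> H /andP[sHG cH] sCgH.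
have sHgG : H :^ g^-1 \subset G by rewrite -(conjGid (groupVr Gg)) conjSg.
have := max_cyclic_eq maxC sHgG; rewrite /= cyclicJ cH -sub_conjg.
by move=> /(_ isT sCgH) defC; rewrite -defC conjsgKV.
Qed.

Lemma normal_orbitJG G C D : C <| G -> D \in orbit 'JG G C -> D = C.
Proof.
move=> nsCG /orbitP[g Gg <-].
by apply/val_inj; rewrite /= (normP (subsetP (normal_norm nsCG) g Gg)).
Qed.

End MaxCyclics.

Section Quotient.

Set Implicit Arguments. Unset Strict Implicit.

Variables (gT : finGroupType) (G N : {group gT}).
Hypothesis nsNG : N <| G.

Lemma quotient_orbitJG D :
  quotient_groups N (orbit 'JG G D) = orbit 'JG (G / N) (D / N)%G.
Proof.
have nNG := normal_norm nsNG.
apply/setP => E; apply/imsetP/orbitP.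
  case=> _ /orbitP[g Gg <-] ->; exists (coset N g); first exact: mem_quotient.
  by apply/val_inj; rewrite /= quotientJ // (subsetP nNG).
case=> _ /morphimP[g Ng Gg ->] <-.
exists (D :^ g)%G; first by apply/orbitP; exists g.
by apply/val_inj; rewrite /= quotientJ.
Qed.

Lemma max_cyclics_quotient (E : {group coset_of N}) :
  E \in max_cyclics (G / N) -> exists2 D, D \in max_cyclics G & (D / N)%G = E.
Proof.
move=> maxE; have [e defE] := cyclicP (max_cyclic_cyclic maxE).
have /morphimP[x Nx Gx ex] : e \in G / N.
  by rewrite (subsetP (max_cyclic_sub maxE)) // defE cycle_id.
have sxG : <[x]> \subset G by rewrite cycle_subG.
have [D maxD sxD] := max_cyclic_exists sxG (cycle_cyclic x).
exists D => //; apply: max_cyclic_eq maxE _ _ _.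
- by rewrite quotientS // (max_cyclic_sub maxD).
- by rewrite quotient_cyclic // (max_cyclic_cyclic maxD).
- by rewrite defE ex -quotient_cycle // quotientS.
Qed.

Lemma max_cyclic_classes_quotient :
  max_cyclic_classes (G / N) \subset
    quotient_groups N @: max_cyclic_classes G.
Proof.
apply/subsetP => _ /imsetP[E maxE ->].
have [D maxD <-] := max_cyclics_quotient maxE.
by apply/imsetP; exists (orbit 'JG G D); rewrite ?quotient_orbitJG ?imset_f.
Qed.

Section EtaQuotientEq.

Hypothesis eq_eta : eta (G / N) = eta G.

Lemma max_cyclic_classes_quotient_eq :
  max_cyclic_classes (G / N) = quotient_groups N @: max_cyclic_classes G.
Proof.
apply/eqP; rewrite eqEcard max_cyclic_classes_quotient /= -etaE eq_eta.
exact: leq_imset_card.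
Qed.

Lemma quotient_groups_inj :
  {in max_cyclic_classes G &, injective (quotient_groups N)}.
Proof.
apply/imset_injP; rewrite eqn_leq leq_imset_card /=.
by rewrite -max_cyclic_classes_quotient_eq -!etaE eq_eta.
Qed.

Lemma quotient_max_cyclic C :
  C \in max_cyclics G -> (C / N)%G \in max_cyclics (G / N).
Proof.
move=> maxC.
have : quotient_groups N (orbit 'JG G C) \in max_cyclic_classes (G / N).
  by rewrite max_cyclic_classes_quotient_eq !imset_f.
case/imsetP=> E maxE; rewrite quotient_orbitJG => defCN.
have : (C / N)%G \in orbit 'JG (G / N) E by rewrite -defCN orbit_refl.
by case/orbitP=> a Ga <-; apply: max_cyclicsJ.
Qed.

Lemma max_cyclic_conj_of_quotient_eq C D :
  C \in max_cyclics G -> D \in max_cyclics G -> (D / N)%G = (C / N)%G ->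
  D \in orbit 'JG G C.
Proof.
move=> maxC maxD eqDC.
have: orbit 'JG G D = orbit 'JG G C.
  apply: quotient_groups_inj; rewrite ?imset_f //.
  by rewrite !quotient_orbitJG eqDC.
by move <-; apply: orbit_refl.
Qed.

Lemma sub_normal_max_cyclic C :
  C \in max_cyclics G -> C <| G -> N \subset C.
Proof.
move=> maxC nsCG; have [c defC] := cyclicP (max_cyclic_cyclic maxC).
have nNG := normal_norm nsNG.
have Cc : c \in C by rewrite defC cycle_id.
have Gc : c \in G := subsetP (normal_sub nsCG) c Cc.
apply/subsetP => x Nx; have Gx := subsetP (normal_sub nsNG) x Nx.
have scxG : <[c * x]> \subset G by rewrite cycle_subG groupM.
have [D maxD scxD] := max_cyclic_exists scxG (cycle_cyclic _).
have eqDC : (D / N)%G = (C / N)%G.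
  apply: max_cyclic_eq (quotient_max_cyclic maxC) _ _ _.
  - by rewrite quotientS // (max_cyclic_sub maxD).
  - by rewrite quotient_cyclic // (max_cyclic_cyclic maxD).
  rewrite /= defC quotient_cycle ?(subsetP nNG) // -(coset_kerr c Nx).
  by rewrite -quotient_cycle ?quotientS // groupM ?(subsetP nNG).
have defD := normal_orbitJG nsCG (max_cyclic_conj_of_quotient_eq maxC maxD eqDC).
have Ccx : c * x \in C by rewrite -defD (subsetP scxD) ?cycle_id.
by rewrite -(groupMl x Cc).
Qed.

End EtaQuotientEq.

End Quotient.

Theorem theorem1p3 (gT : finGroupType) (G : {group gT}) (p : nat) :
  prime p -> p.-group G ->
  (exists2 C : {group gT}, C \in max_cyclics G & C <| G) ->
  cyclic (Xgrp G).
Proof.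
move=> _ _ [C maxC nsCG]; apply: cyclicS (max_cyclic_cyclic maxC).
rewrite gen_subG; apply/bigcupsP => N /andP[nsNG /eqP eq_eta].
exact (sub_normal_max_cyclic nsNG eq_eta maxC nsCG).
Qed.
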